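(* Let $\epsilon>0$ and $n\ge1$. Consider mechanisms $Q:\mathbb{R}^n\to\Delta(\mathbb{R}^n)$ of the form $Qu=u+V$, where the noise $V$ has distribution $g\in\Delta(\mathbb{R}^n)$ independent of the input $u$, and suppose $Q$ is $\epsilon$-Lipschitz private with respect to the $\ell_1$-norm on $\mathbb{R}^n$. Then $$\mathbb{E}_{V\sim g}\|V\|_2^2\;\ge\;\mathbb{E}_{V\sim l_1^n}\|V\|_2^2=\frac{2n}{\epsilon^2},$$ where $l_1^n(v)=\left(\frac{\epsilon}{2}\right)^n e^{-\epsilon\|v\|_1}$; i.e. the Laplace mechanism adding noise with density $l_1^n$ minimizes the mean-squared error for the identity query $q(u)=u$ among all such mechanisms.
   Context: $\Delta(\mathcal{Y})$ denotes the set of Borel probability measures on $\mathcal{Y}$. For a normed space $(\mathcal{U},\|\cdot\|)$, a mechanism $Q:\mathcal{U}\to\Delta(\mathcal{Y})$ is $\epsilon$-Lipschitz private if for all $u,u'\in\mathcal{U}$ and all measurable $\mathcal{S}\subseteq\mathcal{Y}$, $|\ln\mathbb{P}(Qu\in\mathcal{S})-\ln\mathbb{P}(Qu'\in\mathcal{S})|\le\epsilon\|u-u'\|$, equivalently $\mathbb{P}(Qu\in\mathcal{S})\le e^{\epsilon\|u-u'\|}\mathbb{P}(Qu'\in\mathcal{S})$. *)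

(* R^n is modelled as n.-tuple R,
   which MathComp-Analysis equips with the product sigma-algebra of the
   Borel sigma-algebras (generated by the coordinate projections tnth),
   i.e. the Borel sigma-algebra of R^n. *)
From HB Require Import structures.
From mathcomp Require Import all_boot all_order all_algebra.
From mathcomp Require Import all_classical all_reals all_analysis.
Set Implicit Arguments. Unset Strict Implicit. Unset Printing Implicit Defensive.
Import Order.TTheory GRing.Theory Num.Theory.
Local Open Scope classical_set_scope.
Local Open Scope ring_scope.

Section Rn.
Variable R : realType.

Definition tadd n (u v : n.-tuple R) : n.-tuple R :=
  [tuple tnth u i + tnth v i | i < n].
Definition tsub n (u v : n.-tuple R) : n.-tuple R :=
  [tuple tnth u i - tnth v i | i < n].

Definition l1norm n (v : n.-tuple R) : R := \sum_(i < n) `|tnth v i|.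
Definition l2sq n (v : n.-tuple R) : R := \sum_(i < n) (tnth v i) ^+ 2.

(* The additive-noise mechanism Q u = u + V, V ~ g, is eps-Lipschitz private
   w.r.t. the l1 norm:  P(Qu in S) <= exp(eps ||u-u'||_1) P(Qu' in S).
   Here P(Qu in S) = g {v | u + v in S}. *)
Definition additive_lipschitz_private n (eps : R)
    (g : probability (n.-tuple R) R) : Prop :=
  forall (u u' : n.-tuple R) (S : set (n.-tuple R)), measurable S ->
    (g (tadd u @^-1` S) <=
       (expR (eps * l1norm (tsub u u')))%:E * g (tadd u' @^-1` S))%E.

(* n-fold iterated Lebesgue integral over R^n (for nonnegative integrands
   this is the Lebesgue integral on R^n, by Tonelli) *)
Fixpoint lebesgue_int_n (n : nat) : (n.-tuple R -> \bar R) -> \bar R :=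
  match n with
  | 0 => fun f => f [tuple]
  | k.+1 => fun f =>
      (\int[@lebesgue_measure R]_x lebesgue_int_n (fun t => f (cons_tuple x t)))%E
  end.

Definition laplace_density n (eps : R) (v : n.-tuple R) : R :=
  (eps / 2) ^+ n * expR (- (eps * l1norm v)).

End Rn.

(* Privacy of [u |-> u + V] with respect to the l1 norm, tested
   on shifts of a single coordinate, says that each coordinate [X = V_i]
   satisfies [P (X + t \in S) <= e^{eps |t|} P (X \in S)].  Shifting the
   halves [X >= 0] and [X < 0] by [s] and [-s] yields the tail bound
   [P (|X| >= s) >= e^{-eps s}], hence [E X^2 = \int_0^oo P (X^2 > r) dr >=
   \int_0^oo e^{-eps sqrt r} dr = 2 / eps^2].  Summing over the [n]
   coordinates gives the lower bound; the Laplace density attains it, as its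
   coordinates are independent with variance [2 / eps^2]. *)

From HB Require Import structures.
From mathcomp Require Import all_boot all_order all_algebra.
From mathcomp Require Import all_classical all_reals all_analysis.
From mathcomp Require Import ring measurable_realfun.
Import Order.TTheory GRing.Theory Num.Theory.
Import numFieldNormedType.Exports.
Local Open Scope classical_set_scope.
Local Open Scope ring_scope.

Section exponential_integrals.
Context {R : realType}.
Local Notation mu := (@lebesgue_measure R).

Lemma powexp_le_fact (k : nat) (y : R) : 0 < y ->
  y ^+ k * expR (- y) <= (k.+1)`!%:R / y.
Proof.
move=> y0; have e0 := expR_gt0 y.
have C0 : 0 < (k.+1)`!%:R :> R by rewrite ltr0n fact_gt0.
rewrite expRN ler_pdivlMr // mulrAC ler_pdivrMr // -exprSr.
apply: le_trans (ler_wpM2l (ltW C0) (expR_ge1Dxn k (ltW y0))).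
by rewrite mulrDr mulr1 mulrCA divff ?gt_eqF // mulr1 lerDr ltW.
Qed.

Lemma powexp_cvgy (k : nat) (a : R) : 0 < a ->
  x ^+ k * expR (- (a * x)) @[x --> +oo] --> 0.
Proof.
move=> a0; have ak0 : a ^+ k != 0 by rewrite expf_neq0 // gt_eqF.
have inv_cvg : (a * x)^-1 @[x --> +oo] --> 0.
  apply/gtr0_cvgV0; last by apply: (gt0_cvgMry a0); exact: cvg_id.
  near=> x; have x0 : 0 < x by near: x; apply: nbhs_pinfty_gt; rewrite num_real.
  exact: mulr_gt0.
apply: (@squeeze_cvgr _ _ _ _ (fun=> 0)
  (fun x => a ^- k * ((k.+1)`!%:R * (a * x)^-1))); last 2 first.
- exact: cvg_cst.
- rewrite -[X in _ --> X](mulr0 (a ^- k)); apply: cvgMl_tmp.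
  by rewrite -[X in _ --> X](mulr0 (k.+1)`!%:R); apply: cvgMl_tmp.
near=> x.
have x0 : 0 < x by near: x; apply: nbhs_pinfty_gt; rewrite num_real.
rewrite mulr_ge0 ?exprn_ge0 ?expR_ge0 ?(ltW x0) //=.
have := @powexp_le_fact k (a * x) (mulr_gt0 a0 x0); rewrite exprMn => hb.
rewrite -(mulKf ak0 (x ^+ k * expR (- (a * x)))) (mulrA (a ^+ k)).
by rewrite ler_wpM2l // invr_ge0 exprn_ge0 // ltW.
Unshelve. all: by end_near. Qed.

Lemma quadratic_expRN_cvgy (c0 c1 c2 a : R) : 0 < a ->
  (c0 + c1 * x + c2 * x ^+ 2) * expR (- (a * x)) @[x --> +oo] --> 0.
Proof.
move=> a0.
have -> : (fun x => (c0 + c1 * x + c2 * x ^+ 2) * expR (- (a * x)))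
    = fun x => c0 * (x ^+ 0 * expR (- (a * x))) + c1 * (x ^+ 1 * expR (- (a * x)))
             + c2 * (x ^+ 2 * expR (- (a * x))).
  by apply/funext => x; rewrite expr0 expr1; ring.
rewrite -[X in _ --> X](addr0 0) -[X in _ --> X + _](addr0 0).
rewrite -[X in _ --> X + _ + _](mulr0 c0) -[X in _ --> _ + X + _](mulr0 c1).
rewrite -[X in _ --> _ + X](mulr0 c2).
by do 2?apply: cvgD; apply: cvgMl_tmp; exact: powexp_cvgy.
Qed.

Lemma is_derive1_continuous {F dF : R -> R} :
  (forall x : R, is_derive x 1 F (dF x)) -> continuous F.
Proof.
move=> h x; apply: differentiable_continuous; apply/derivable1_diffP.
by have [] := h x.
Qed.

Lemma continuous_expRN_sqrt (a : R) :
  continuous (fun x : R => expR (- (a * Num.sqrt x))).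
Proof.
have hd (s : R) : is_derive s 1 (fun s => expR (- (a * s))) (- a * expR (- (a * s))).
  by apply: is_derive_eq; rewrite /GRing.scale /= !mulr1; ring.
have ec := is_derive1_continuous hd.
have -> : (fun x : R => expR (- (a * Num.sqrt x)))
    = (fun s => expR (- (a * s))) \o Num.sqrt by [].
by move=> x; apply: continuous_comp; [exact: sqrt_continuous | exact: ec].
Qed.

Lemma integral_laplace_quadratic (eps A B : R) : 0 < eps -> 0 <= A -> 0 <= B ->
  (\int[mu]_x (((A + B * x ^+ 2) * (eps / 2 * expR (- (eps * `|x|)))))%:E
   = (A + B * (2 / eps ^+ 2))%:E)%E.
Proof.
move=> e0 A0 B0; have en0 : eps != 0 by rewrite gt_eqF.
pose g x := (A + B * x ^+ 2) * (eps / 2 * expR (- (eps * x))).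
have gd (x : R) : is_derive x 1 g ((2 * B * x) * (eps / 2 * expR (- (eps * x)))
     + (A + B * x ^+ 2) * (eps / 2 * (- eps * expR (- (eps * x))))).
  by apply: is_derive_eq; rewrite /GRing.scale /= !mulr1; ring.
have f0 (x : R) : 0 <= (A + B * x ^+ 2) * (eps / 2 * expR (- (eps * `|x|))).
  rewrite mulr_ge0 ?addr_ge0 ?(mulr_ge0 B0) ?sqr_ge0 //.
  by rewrite mulr_ge0 ?expR_ge0 ?divr_ge0 ?(ltW e0).
have fc : continuous (fun x : R => (A + B * x ^+ 2) * (eps / 2 * expR (- (eps * `|x|)))).
  have -> : (fun x => (A + B * x ^+ 2) * (eps / 2 * expR (- (eps * `|x|))))
      = g \o (fun x : R => `|x|).
    by apply/funext => x /=; rewrite /g real_normK ?num_real.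
  have gc : continuous g := is_derive1_continuous gd.
  by move=> x; apply: continuous_comp; [exact: norm_continuous | exact: gc].
rewrite ge0_symfun_integralT //; last by move=> x /=; rewrite normrN sqrrN.
pose F x := - (expR (- (eps * x)) * (A + B * (x ^+ 2 + 2 * x / eps + 2 / eps ^+ 2))) / 2.
have Fd (x : R) : is_derive x 1 F (g x).
  by apply: is_derive_eq; rewrite /GRing.scale /= !mulr1 /g; field.
have Fcvg : F x @[x --> +oo] --> 0.
  have -> : F = fun x => (- (A + 2 * B / eps ^+ 2) / 2 + - B / eps * x + - B / 2 * x ^+ 2)
      * expR (- (eps * x)).
    by apply/funext => x; rewrite /F; field.
  exact: quadratic_expRN_cvgy.
rewrite -set_itvcy (@ge0_continuous_FTC2y _ _ F 0 0).
- rewrite -EFinB -EFinM; congr EFin.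
  by rewrite /F /= expr0n /= !mulr0 oppr0 expR0 mul1r add0r; field.
- by move=> x _; exact: f0.
- exact: continuous_subspaceT.
- exact: Fcvg.
- by move=> x _; have [] := Fd x.
- exact: cvg_at_right_filter (is_derive1_continuous Fd 0).
- move=> x; rewrite in_itv /= andbT => x0.
  by have := Fd x => Fdx; rewrite derive1E derive_val /g gtr0_norm.
Qed.

Lemma sqrt_cvgy : (@Num.sqrt R) x @[x --> +oo] --> +oo.
Proof.
apply/cvgryPge => A; near=> x.
have xA : A ^+ 2 <= x by near: x; apply: nbhs_pinfty_ge; rewrite num_real.
by apply: le_trans (ler_wsqrtr xA); rewrite sqrtr_sqr ler_norm.
Unshelve. all: by end_near. Qed.

(* Substituting [r = s^2]: [G] is a primitive of [2 s e^{-eps s}]. *)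
Lemma integral_expRN_sqrt (eps : R) : 0 < eps ->
  (\int[mu]_(r in `[0%R, +oo[) (expR (- (eps * Num.sqrt r)))%:E
   = (2 / eps ^+ 2)%:E)%E.
Proof.
move=> e0; have en0 : eps != 0 by rewrite gt_eqF.
pose G s := - (2 / eps) * ((s + 1 / eps) * expR (- (eps * s))).
have Gd (s : R) : is_derive s 1 G (2 * s * expR (- (eps * s))).
  by apply: is_derive_eq; rewrite /GRing.scale /= !mulr1; field.
pose F := G \o Num.sqrt.
have Gc : continuous G := is_derive1_continuous Gd.
have Fc : continuous F.
  by move=> x; apply: continuous_comp; [exact: sqrt_continuous | exact: Gc].
have Fd (r : R) : 0 < r -> is_derive r 1 F (expR (- (eps * Num.sqrt r))).
  move=> r0; have := is_derive1_comp (Gd (Num.sqrt r)) (is_derive1_sqrt r0).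
  have s0 : Num.sqrt r != 0 by rewrite gt_eqF // sqrtr_gt0.
  by move=> ?; apply: is_derive_eq; field.
have Gcvg : G x @[x --> +oo] --> 0.
  have -> : G = fun s => (- (2 / eps ^+ 2) + - (2 / eps) * s + 0 * s ^+ 2)
      * expR (- (eps * s)).
    by apply/funext => s; rewrite /G; field.
  exact: quadratic_expRN_cvgy.
rewrite (@ge0_continuous_FTC2y _ _ F 0 0).
- by congr EFin; rewrite /F /G /= sqrtr0 mulr0 oppr0 expR0 add0r mulr1; field.
- by move=> x _; exact: expR_ge0.
- exact/continuous_subspaceT/continuous_expRN_sqrt.
- exact: cvg_comp sqrt_cvgy Gcvg.
- by move=> x x0; have [] := Fd x x0.
- exact: cvg_at_right_filter (Fc 0).
- move=> x; rewrite in_itv /= andbT => x0.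
  by have := Fd x x0 => Fdx; rewrite derive1E derive_val.
Qed.

Lemma expRN_le_of_right (a b q : R) : 0 < a ->
  (forall s, b < s -> expR (- (a * s)) <= q) -> expR (- (a * b)) <= q.
Proof.
move=> a0 h; apply/ler_addgt0Pr => e e0.
set c := expR (- (a * b)); have c0 : 0 < c := expR_gt0 _.
have := h (b + e / (c * a)); rewrite ltrDl divr_gt0 ?mulr_gt0 // => /(_ isT).
rewrite mulrDr opprD expRD -/c => hq; rewrite -lerBlDr; apply: le_trans hq.
have := expR_ge1Dx (- (a * (e / (c * a)))) => /(ler_wpM2l (ltW c0)).
by apply: le_trans; rewrite le_eqVlt; apply/orP; left; apply/eqP; field; rewrite ?gt_eqF.
Qed.

End exponential_integrals.

Section laplace_moment.
Context {R : realType}.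
Local Notation mu := (@lebesgue_measure R).

Lemma l2sq_cons k (x : R) (t : k.-tuple R) :
  l2sq (cons_tuple x t) = x ^+ 2 + l2sq t.
Proof.
rewrite /l2sq big_ord_recl; congr (_ + _).
by apply: eq_bigr => i _; rewrite tnthS.
Qed.

Lemma l1norm_cons k (x : R) (t : k.-tuple R) :
  l1norm (cons_tuple x t) = `|x| + l1norm t.
Proof.
rewrite /l1norm big_ord_recl; congr (_ + _).
by apply: eq_bigr => i _; rewrite tnthS.
Qed.

Lemma laplace_density_cons k (eps x : R) (t : k.-tuple R) :
  laplace_density eps (cons_tuple x t) =
  eps / 2 * expR (- (eps * `|x|)) * laplace_density eps t.
Proof. by rewrite /laplace_density l1norm_cons exprS mulrDr opprD expRD; ring. Qed.

(* Stated for [a + b ||v||^2] with [a, b >= 0] so that the induction goes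
   through: integrating out the first coordinate produces again such an
   integrand, with weights depending on that coordinate. *)
Lemma laplace_affine_l2sq_moment (eps a b : R) k :
  0 < eps -> 0 <= a -> 0 <= b ->
  lebesgue_int_n (fun t : k.-tuple R => ((a + b * l2sq t) * laplace_density eps t)%:E)
  = (a + b * (2 * k%:R / eps ^+ 2))%:E.
Proof.
move=> e0; elim: k a b => [|k IH] a b a0 b0.
  rewrite /= /l2sq /laplace_density /l1norm !big_ord0 expr0 !mulr0 oppr0 expR0.
  by rewrite mul0r !mulr0 !addr0 !mulr1.
pose w (x : R) := eps / 2 * expR (- (eps * `|x|)).
have w0 (x : R) : 0 <= w x by rewrite mulr_ge0 ?expR_ge0 ?divr_ge0 ?(ltW e0).
transitivity (\int[mu]_x (((a + b * (2 * k%:R / eps ^+ 2)) + b * x ^+ 2) * w x)%:E)%E.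
  apply: eq_integral => x _.
  have -> : (a + b * (2 * k%:R / eps ^+ 2) + b * x ^+ 2) * w x
      = (a + b * x ^+ 2) * w x + b * w x * (2 * k%:R / eps ^+ 2) by ring.
  have q0 : 0 <= a + b * x ^+ 2 by rewrite addr_ge0 // mulr_ge0 // sqr_ge0.
  rewrite -IH ?(mulr_ge0 q0) ?(mulr_ge0 b0) //.
  congr (lebesgue_int_n _); apply/funext => t; congr EFin.
  by rewrite /w l2sq_cons laplace_density_cons; ring.
rewrite /w integral_laplace_quadratic //; last first.
  by rewrite addr_ge0 // mulr_ge0 // mulr_ge0 ?invr_ge0 ?exprn_ge0 ?ler0n ?(ltW e0).
by congr EFin; rewrite -natr1; field; rewrite gt_eqF.
Qed.

End laplace_moment.

Section shift_private.
Context {R : realType} {d : measure_display} {T : measurableType d}.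
Variables (P : probability T R) (X : T -> R) (eps : R).

Definition shift_private : Prop :=
  forall (t : R) (S : set R), measurable S ->
    (P (X @^-1` [set x | S (x + t)%R]) <= (expR (eps * `|t|))%:E * P (X @^-1` S))%E.

Hypotheses (e0 : 0 < eps) (mX : measurable_fun setT X) (HX : shift_private).

Let measurable_preimage_itv (i : interval R) : measurable (X @^-1` [set` i]).
Proof. by rewrite -[X @^-1` _]setTI; exact: mX. Qed.

Let measure_fine {A : set T} : measurable A -> P A = (fine (P A))%:E.
Proof. by move=> mA; rewrite fineK // fin_num_measure. Qed.

Let measurable_abs_ge (s : R) : measurable [set w | s <= `|X w|].
Proof.
have -> : [set w | s <= `|X w|] = (fun w => `|X w|) @^-1` `[s, +oo[.
  by apply/seteqP; split => w /=; rewrite in_itv /= andbT.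
rewrite -[_ @^-1` _]setTI.
exact: (measurableT_comp (@normr_measurable R setT) mX measurableT (measurable_itv _)).
Qed.

Let measure_sign_split :
  (P (X @^-1` `[0%R, +oo[) + P (X @^-1` `]-oo, 0%R[) = 1)%E.
Proof.
rewrite -measureU; try exact: measurable_preimage_itv; last first.
  apply/seteqP; split => // w; rewrite /= !in_itv /= andbT => -[h h'].
  by move: (le_lt_trans h h'); rewrite ltxx.
rewrite -(probability_setT P); congr (P _).
apply/seteqP; split => // w _; rewrite /= !in_itv /= andbT.
by case: (leP 0 (X w)) => h; [left | right].
Qed.

Let measure_tails_le (s : R) : 0 < s ->
  (P (X @^-1` `[s, +oo[) + P (X @^-1` `]-oo, (- s)%R[)
   <= P [set w | (s <= `|X w|)%R])%E.
Proof.
move=> s0; rewrite -measureU; try exact: measurable_preimage_itv; last first.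
  apply/seteqP; split => // w; rewrite /= !in_itv /= andbT => -[h h'].
  have : s < - s by apply: le_lt_trans h h'.
  by rewrite -subr_gt0 -opprD oppr_gt0 ltNge addr_ge0 // ltW.
apply: le_measure; rewrite ?inE //.
  by apply: measurableU; exact: measurable_preimage_itv.
move=> w; rewrite /= !in_itv /= ?andbT => -[h|h].
- by apply: le_trans h _; exact: ler_norm.
- by rewrite -normrN; apply: le_trans (ler_norm _); rewrite lerNr ltW.
Qed.

(* Shifting by [s] and by [-s] moves the halves [X >= 0] and [X < 0], which
   together have mass 1, into [X >= s] and [X < -s]. *)
Lemma shift_private_tail (s : R) : 0 < s ->
  ((expR (- (eps * s)))%:E <= P [set w | (s <= `|X w|)%R])%E.
Proof.
move=> s0.
have hA : (P (X @^-1` `[0%R, +oo[) <= (expR (eps * s))%:E * P (X @^-1` `[s, +oo[))%E.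
  have := HX s _ (measurable_itv `[s, +oo[).
  have -> : X @^-1` [set x | [set` `[s, +oo[] (x + s)] = X @^-1` `[0%R, +oo[.
    by apply/seteqP; split => w; rewrite /= !in_itv /= !andbT lerDr.
  by rewrite gtr0_norm.
have hB : (P (X @^-1` `]-oo, 0%R[)
           <= (expR (eps * s))%:E * P (X @^-1` `]-oo, (- s)%R[))%E.
  have := HX (- s) _ (measurable_itv `]-oo, (- s)%R[).
  have -> : X @^-1` [set x | [set` `]-oo, (- s)%R[] (x + - s)] = X @^-1` `]-oo, 0%R[.
    by apply/seteqP; split => w; rewrite /= !in_itv /= ltrBlDr addNr.
  by rewrite normrN gtr0_norm.
have := measure_tails_le _ s0; have := measure_sign_split; move: hA hB.
rewrite (measure_fine (measurable_preimage_itv `[0%R, +oo[)).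
rewrite (measure_fine (measurable_preimage_itv `]-oo, 0%R[)).
rewrite (measure_fine (measurable_preimage_itv `[s, +oo[)).
rewrite (measure_fine (measurable_preimage_itv `]-oo, (- s)%R[)).
rewrite (measure_fine (measurable_abs_ge s)).
rewrite -!EFinM -!EFinD !lee_fin => hA hB /(congr1 fine) /= h01 hAB.
rewrite expRN -[X in X <= _]mulr1 ler_pdivrMl ?expR_gt0 // -h01.
by apply: le_trans (lerD hA hB) _; rewrite -mulrDr ler_wpM2l ?expR_ge0.
Qed.

Lemma shift_private_sq_tail (r : R) : 0 <= r ->
  ((expR (- (eps * Num.sqrt r)))%:E <= P [set w | (r < X w ^+ 2)%R])%E.
Proof.
move=> r0.
have mQ : measurable [set w | r < X w ^+ 2].
  have -> : [set w | r < X w ^+ 2] = (fun w => X w ^+ 2) @^-1` `]r, +oo[.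
    by apply/seteqP; split => w /=; rewrite in_itv /= andbT.
  rewrite -[_ @^-1` _]setTI.
  exact: (measurable_funX 2 mX measurableT (measurable_itv _)).
rewrite (measure_fine mQ) lee_fin; apply: expRN_le_of_right => // s rs.
have s0 : 0 < s by apply: le_lt_trans rs; exact: sqrtr_ge0.
rewrite -lee_fin -(measure_fine mQ).
apply: (le_trans (shift_private_tail _ s0)); apply: le_measure; rewrite ?inE //.
move=> w /= sX; rewrite -ltr_sqrt ?sqrtr_sqr; last first.
  by rewrite -real_normK ?num_real // exprn_gt0 // (lt_le_trans s0).
exact: lt_le_trans rs sX.
Qed.

(* Layer-cake formula: [E X^2] is the integral of the tail [P (X^2 > r)]
   over [r >= 0], which dominates [e^{-eps sqrt r}]. *)
Lemma shift_private_second_moment :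
  ((2 / eps ^+ 2)%:E <= \int[P]_w ((X w) ^+ 2)%:E)%E.
Proof.
have mY : (fun w => X w ^+ 2) \in mfun by rewrite inE; exact: measurable_funX.
pose Y : {RV P >-> R} := mfun_Sub mY.
have -> : (\int[P]_w ((X w) ^+ 2)%:E)%E = 'E_P[Y]%E by rewrite expectation_def.
rewrite ge0_expectation_ccdf; last by move=> w; exact: sqr_ge0.
rewrite -(integral_expRN_sqrt _ e0); apply: ge0_le_integral => //.
- apply/measurable_EFinP; apply: measurable_funTS.
  by apply: continuous_measurable_fun; exact: continuous_expRN_sqrt.
- by apply: measurable_funTS; exact: ccdf_measurable.
move=> r; rewrite /= in_itv /= andbT => r0.
rewrite /ccdf /distribution /pushforward.
have -> : Y @^-1` `]r, +oo[ = [set w | r < X w ^+ 2].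
  by apply/seteqP; split => w /=; rewrite in_itv /= andbT.
exact: shift_private_sq_tail.
Qed.

End shift_private.

Lemma additive_private_tnth (R : realType) (eps : R) (n : nat)
    (g : probability (n.-tuple R) R) (i : 'I_n) :
  additive_lipschitz_private eps g ->
  shift_private g (fun v : n.-tuple R => tnth v i) eps.
Proof.
move=> Hg t S mS; set Xi := fun v : n.-tuple R => tnth v i.
pose u : n.-tuple R := [tuple if j == i then t else 0 | j < n].
pose u0 : n.-tuple R := [tuple 0 | j < n].
have mSi : measurable (Xi @^-1` S).
  by rewrite -[_ @^-1` _]setTI; exact: measurable_tnth.
have := Hg u u0 _ mSi.
have -> : tadd u @^-1` (Xi @^-1` S) = Xi @^-1` [set x | S (x + t)].
  by apply/seteqP; split => v /=; rewrite /Xi !tnth_mktuple eqxx addrC.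
have -> : tadd u0 @^-1` (Xi @^-1` S) = Xi @^-1` S.
  by apply/seteqP; split => v /=; rewrite /Xi !tnth_mktuple add0r.
suff -> : l1norm (tsub u u0) = `|t| by [].
rewrite /l1norm (bigD1 i) //= big1 ?addr0; first by rewrite !tnth_mktuple eqxx subr0.
by move=> j ji; rewrite !tnth_mktuple (negbTE ji) subr0 normr0.
Qed.

Lemma integral_l2sq (R : realType) (n : nat)
    (mu : {measure set (n.-tuple R) -> \bar R}) :
  (\int[mu]_v (l2sq v)%:E = \sum_(i < n) \int[mu]_v ((tnth v i) ^+ 2)%:E)%E.
Proof.
under eq_integral do rewrite /l2sq -sumEFin.
rewrite ge0_integral_sum // => [i|i v _]; last by rewrite lee_fin sqr_ge0.
by apply/measurable_EFinP; exact: (measurable_funX 2 (measurable_tnth i)).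
Qed.

Theorem theorem2 (R : realType) (eps : R) (n : nat)
    (heps : 0 < eps) (hn : (1 <= n)%N)
    (g : probability (n.-tuple R) R) :
  additive_lipschitz_private eps g ->
  ((2 * n%:R / eps ^+ 2)%:E <= \int[g]_v (l2sq v)%:E)%E /\
  lebesgue_int_n (fun v : n.-tuple R => (l2sq v * laplace_density eps v)%:E)
    = (2 * n%:R / eps ^+ 2)%:E.
Proof.
move=> Hg; split.
  rewrite integral_l2sq.
  have -> : (2 * n%:R / eps ^+ 2)%:E = (\sum_(i < n) (2 / eps ^+ 2)%:E)%E.
    by rewrite sumEFin sumr_const card_ord -mulr_natr; congr EFin; ring.
  apply: lee_sum => i _; apply: shift_private_second_moment => //.
    exact: measurable_tnth.
  exact: additive_private_tnth.
have := @laplace_affine_l2sq_moment R eps 0 1 n heps (lexx 0) ler01.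
rewrite add0r mul1r => <-.
by congr (lebesgue_int_n _); apply/funext => v; rewrite add0r mul1r.
Qed.
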